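(* Let $\Omega\subset\mathbb R^n$ be a bounded domain, $\alpha<0$, and $\varphi:\partial\Omega\to\mathbb R$ positive. Then there is at most one positive solution $u\in C^2(\Omega)\cap C^0(\overline\Omega)$ of $$\mathrm{div}\left(\frac{Du}{\sqrt{1-|Du|^2}}\right)=\frac{\alpha}{u\sqrt{1-|Du|^2}}\ \text{ in }\Omega,\qquad u=\varphi\ \text{ on }\partial\Omega,\qquad |Du|<1\ \text{ in }\overline\Omega.$$ *)

From HB Require Import structures.
From mathcomp Require Import all_boot all_order all_algebra.
From mathcomp Require Import all_classical all_reals all_analysis.
Set Implicit Arguments. Unset Strict Implicit. Unset Printing Implicit Defensive.
Import Order.TTheory GRing.Theory Num.Theory.
Import numFieldNormedType.Exports.
Local Open Scope classical_set_scope.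
Local Open Scope ring_scope.

Definition partial (R : realType) (n : nat) (i : 'I_n)
  (f : 'rV[R]_n -> R) (x : 'rV[R]_n) : R :=
  'D_(delta_mx 0 i) f x.

Definition grad_norm2 (R : realType) (n : nat) (f : 'rV[R]_n -> R)
  (x : 'rV[R]_n) : R :=
  \sum_(i < n) (partial i f x) ^+ 2.

Definition C2_on (R : realType) (n : nat) (O : set 'rV[R]_n)
  (f : 'rV[R]_n -> R) : Prop :=
  forall x, O x ->
    [/\ differentiable f x,
        (forall i : 'I_n, differentiable (partial i f) x) &
        (forall i j : 'I_n, {for x, continuous (partial j (partial i f))})].

Definition divergence (R : realType) (n : nat) (V : 'I_n -> 'rV[R]_n -> R)
  (x : 'rV[R]_n) : R :=
  \sum_(i < n) partial i (V i) x.

Definition lm_operator (R : realType) (n : nat) (u : 'rV[R]_n -> R)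
  (x : 'rV[R]_n) : R :=
  divergence (fun i y => partial i u y / Num.sqrt (1 - grad_norm2 u y)) x.

Definition bdry (R : realType) (n : nat) (O : set 'rV[R]_n) : set 'rV[R]_n :=
  closure O `\` interior O.

Definition is_positive_solution (R : realType) (n : nat) (O : set 'rV[R]_n)
  (alpha : R) (phi : 'rV[R]_n -> R) (u : 'rV[R]_n -> R) : Prop :=
  [/\ C2_on O u /\ {within closure O, continuous u},
      (forall x, closure O x -> 0 < u x),
      (forall x, O x ->
         lm_operator u x = alpha / (u x * Num.sqrt (1 - grad_norm2 u x))),
      (forall x, bdry O x -> u x = phi x) &
      (exists theta : R, theta < 1 /\
         forall x, O x -> Num.sqrt (grad_norm2 u x) <= theta)].

From HB Require Import structures.
From mathcomp Require Import all_boot all_order all_algebra.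
From mathcomp Require Import all_classical all_reals all_analysis.
From mathcomp Require Import ring.
Import Order.TTheory GRing.Theory Num.Theory.
Import numFieldNormedType.Exports.
Local Open Scope classical_set_scope.
Local Open Scope ring_scope.

(* Comparison principle.  If u1 > u2 somewhere, u1 - u2 attains a positive
   maximum on the compact closure of Omega at a point x, which lies in Omega
   because u1 = u2 = phi on the boundary.  There Du1 = Du2 and
   D^2 u1 <= D^2 u2, and the operator, expanded as
   Lap u / W + <D^2 u Du, Du> / W^3 with W = sqrt (1 - |Du|^2), is monotone in
   D^2 u for fixed Du; hence lm u1 x <= lm u2 x.  But alpha < 0 makes the
   right-hand side alpha / (u W) strictly increasing in u > 0, so
   lm u1 x > lm u2 x. *)

Section directional_derivative_along_lines.
Context {R : realType} {V : normedModType R}.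
Implicit Types (f : V -> R) (x v : V) (t : R).

Let line_quotientE f x v t :
  (fun h : R => h^-1 *: (((fun s : R => f (s *: v + x)) \o shift t) (h *: 1)
      - f (t *: v + x))) =
  (fun h : R => h^-1 *: ((f \o shift (t *: v + x)) (h *: v) - f (t *: v + x))).
Proof. by apply/funext => h /=; rewrite [h *: 1]mulr1 scalerDl addrA. Qed.

Lemma derive_line f x v t :
  'D_1 (fun s : R => f (s *: v + x)) t = 'D_v f (t *: v + x).
Proof. by rewrite /derive line_quotientE. Qed.

Lemma derivable_line f x v t :
  derivable (fun s : R => f (s *: v + x)) t 1 <-> derivable f (t *: v + x) v.
Proof. by rewrite /derivable line_quotientE. Qed.

Lemma is_derive_line f x v t df :
  is_derive t 1 (fun s : R => f (s *: v + x)) df <-> is_derive (t *: v + x) v f df.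
Proof.
split=> -[fd <-]; apply: DeriveDef; rewrite ?derive_line //.
  exact/derivable_line.
by rewrite derivable_line.
Qed.

Lemma is_derive_comp_real {f} {g : R -> R} {x v} {df dg : R} :
  is_derive x v f df -> is_derive (f x) 1 g dg -> is_derive x v (g \o f) (dg * df).
Proof.
have x0 : 0 *: v + x = x by rewrite scale0r add0r.
rewrite -{1 2}x0 -is_derive_line => fd gd.
by rewrite -x0 -is_derive_line; apply: is_derive1_comp.
Qed.

Lemma open_segment_subset (O : set V) x v : open O -> O x ->
  exists2 d : R, 0 < d & forall t, `|t| < d -> O (t *: v + x).
Proof.
move=> Oo Ox; have /nbhs_ballP[e e0 He] : nbhs x O by apply: open_nbhs_nbhs.
exists (e / (`|v| + 1)); first by rewrite divr_gt0 // ltr_wpDl.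
move=> t Ht; apply: He; rewrite -ball_normE /= opprD addrCA subrr addr0 normrN normrZ.
rewrite ltr_pdivlMr ?ltr_wpDl // in Ht.
by apply: le_lt_trans Ht; apply: ler_wpM2l => //; rewrite lerDl.
Qed.

End directional_derivative_along_lines.

Section second_derivative_test.
Context {R : realType}.

Lemma derive_gt0_right {K : R -> R} :
  K 0 = 0 -> derivable K 0 1 -> 0 < 'D_1 K 0 ->
  exists2 e : R, 0 < e & forall c, 0 < c -> c < e -> 0 < K c.
Proof.
move=> K0 Kd D0; have /cvgr_gt/(_ _ D0)[e /= e0 He] := Kd.
exists e => // c c0 ce.
have : 0 < c^-1 *: ((K \o shift 0) (c *: 1) - K 0).
  by apply: He; rewrite ?gt_eqF // /ball /= sub0r normrN gtr0_norm.
by rewrite /= [c *: 1]mulr1 addr0 K0 subr0 pmulr_rgt0 // invr_gt0.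
Qed.

Lemma local_max_derive (g K : R -> R) (d : R) : 0 < d ->
  (forall t : R, `|t| < d -> is_derive t 1 g (K t)) ->
  (forall t : R, `|t| < d -> g t <= g 0) -> derivable K 0 1 ->
  K 0 = 0 /\ 'D_1 K 0 <= 0.
Proof.
move=> d0 gK gmax Kd.
have itv t : t \in `]-d, d[%R -> `|t| < d by rewrite in_itv /= ltr_norml.
have K0 : K 0 = 0.
  have [_ <-] : is_derive (0 : R) 1 g (K 0) by apply: gK; rewrite normr0.
  have [_ ->] // : is_derive (0 : R) 1 g 0.
  apply: (@derive1_at_max _ g (- d) d).
  - by rewrite ge0_cp // ltW.
  - by move=> t /itv /gK [].
  - by rewrite in_itv /= oppr_lt0 d0.
  - by move=> t /itv /gmax.
(* If 'D_1 K 0 > 0, then K > 0 on some ]0, e[ and by the mean value theorem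
   g h > g 0 for small h > 0. *)
split=> //; rewrite leNgt; apply/negP => /(derive_gt0_right K0 Kd)[e e0 Kpos].
pose h := Num.min e d / 2.
have : h < Num.min e d by rewrite /h ltr_pdivrMr // ltr_pMr ?ltr1n // lt_min e0 d0.
rewrite lt_min => /andP[he hd].
have h0 : 0 < h by rewrite divr_gt0 // lt_min e0 d0.
have [c] : exists2 c, c \in `]0, h[%R & g h - g 0 = K c * (h - 0).
  apply: MVT => // [t|].
    by rewrite in_itv /= => /andP[t0 th]; apply: gK; rewrite gtr0_norm // (lt_trans th).
  apply: continuous_in_subspaceT => t; rewrite inE /= in_itv /= => /andP[t0 th].
  have /gK[/derivable1_diffP /differentiable_continuous] // : `|t| < d.
  by rewrite ger0_norm // (le_lt_trans th).
rewrite in_itv /= subr0 => /andP[c0 ch] gE.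
have : 0 < g h - g 0 by rewrite gE mulr_gt0 // Kpos // (lt_trans ch).
by rewrite subr_gt0 ltNge gmax // gtr0_norm.
Qed.

End second_derivative_test.

Lemma interior_max_derive {R : realType} {V : normedModType R} {O : set V}
    {w D : V -> R} {x v : V} :
  open O -> O x -> (forall y, O y -> w y <= w x) ->
  (forall y, O y -> is_derive y v w (D y)) -> derivable D x v ->
  D x = 0 /\ 'D_v D x <= 0.
Proof.
move=> Oo Ox wmax wD Dd.
have x0 : 0 *: v + x = x by rewrite scale0r add0r.
have [d d0 Od] := open_segment_subset _ _ v Oo Ox.
suff : D (0 *: v + x) = 0 /\ 'D_1 (fun t : R => D (t *: v + x)) 0 <= 0.
  by rewrite derive_line x0.
apply: (@local_max_derive _ (fun t : R => w (t *: v + x)) _ d d0).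
- by move=> t /Od Ot; apply/is_derive_line/wD.
- by move=> t /Od Ot; rewrite x0; apply: wmax.
- by apply/derivable_line; rewrite x0.
Qed.

Section partial_derivatives.
Context {R : realType} {n : nat}.
Implicit Types (u : 'rV[R]_n -> R) (x v : 'rV[R]_n).

Lemma derive_partialE u x v : differentiable u x ->
  'D_v u x = \sum_(j < n) v 0 j * partial j u x.
Proof.
move=> ud; rewrite deriveE // {1}(row_sum_delta v) linear_sum.
by apply: eq_bigr => j _; rewrite linearZ /= -deriveE.
Qed.

Lemma is_derive_grad_norm2 u x v :
  (forall j, derivable (partial j u) x v) ->
  is_derive x v (grad_norm2 u)
    (2 * \sum_(j < n) partial j u x * 'D_v (partial j u) x).
Proof.
move=> ud; have -> : grad_norm2 u = \sum_(j < n) partial j u ^+ 2.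
  by apply/funext => y; rewrite fct_sumE; apply: eq_bigr => j _; rewrite exprfctE.
apply: is_derive_eq; first exact: is_derive_sum (fun j => is_deriveX 2 (derivableP (ud j))).
by rewrite mulr_sumr; apply: eq_bigr => j _; rewrite expr1 mulrA.
Qed.

Definition laplacian u x := \sum_(i < n) partial i (partial i u) x.

Definition hessian_form u x (p : 'I_n -> R) :=
  \sum_(i < n) p i * \sum_(j < n) p j * partial i (partial j u) x.

Lemma sum_delta_row (i : 'I_n) (F : 'I_n -> R) :
  \sum_(j < n) (delta_mx 0 i : 'rV[R]_n) 0 j * F j = F i.
Proof.
rewrite (bigD1 i) //= big1 => [|j /negbTE ji]; first by rewrite mxE !eqxx mul1r addr0.
by rewrite mxE ji andbF mul0r.
Qed.

Lemma hessian_form_delta u x i :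
  hessian_form u x (fun j => (delta_mx 0 i : 'rV[R]_n) 0 j) = partial i (partial i u) x.
Proof. by rewrite /hessian_form !sum_delta_row. Qed.

Lemma hessian_formE u x p : (forall j, differentiable (partial j u) x) ->
  hessian_form u x p = \sum_(j < n) p j * 'D_(\row_i p i) (partial j u) x.
Proof.
move=> ud; transitivity (\sum_(i < n) \sum_(j < n) p i * (p j * partial i (partial j u) x)).
  by apply: eq_bigr => i _; rewrite mulr_sumr.
rewrite exchange_big; apply: eq_bigr => j _ /=.
by rewrite derive_partialE // mulr_sumr; apply: eq_bigr => i _; rewrite mxE mulrCA.
Qed.

Lemma partial_lm_flux u x i :
  (forall j, differentiable (partial j u) x) -> grad_norm2 u x < 1 ->
  partial i (fun y => partial i u y / Num.sqrt (1 - grad_norm2 u y)) x =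
  partial i (partial i u) x / Num.sqrt (1 - grad_norm2 u x) +
  partial i u x * (\sum_(j < n) partial j u x * partial i (partial j u) x)
    / Num.sqrt (1 - grad_norm2 u x) ^+ 3.
Proof.
move=> ud gu1; set e := delta_mx 0 i : 'rV[R]_n.
have pd j : derivable (partial j u) x e by exact: diff_derivable.
have S0 : 0 < 1 - grad_norm2 u x by rewrite subr_gt0.
have W0 : Num.sqrt (1 - grad_norm2 u x) != 0 by rewrite gt_eqF ?sqrtr_gt0.
have Sd := is_deriveB (@is_derive_cst _ _ _ (1 : R) x e) (is_derive_grad_norm2 _ _ _ pd).
have Qd := is_derive_comp_real Sd (is_deriveV W0 (is_derive1_sqrt S0)).
have [_ Pd] := is_deriveM (derivableP (pd i)) Qd.
apply: etrans Pd _; rewrite /GRing.scale /= /partial -/e.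
change ((cst 1 - grad_norm2 u) x) with (1 - grad_norm2 u x).
by field.
Qed.

Lemma lm_operatorE u x :
  (forall j, differentiable (partial j u) x) -> grad_norm2 u x < 1 ->
  lm_operator u x = laplacian u x / Num.sqrt (1 - grad_norm2 u x) +
    hessian_form u x (fun j => partial j u x) / Num.sqrt (1 - grad_norm2 u x) ^+ 3.
Proof.
move=> ud gu1; rewrite /lm_operator /divergence /laplacian /hessian_form.
rewrite !mulr_suml -big_split; apply: eq_bigr => i _ /=.
by rewrite partial_lm_flux.
Qed.

End partial_derivatives.

Section interior_maximum_of_difference.
Context {R : realType} {n : nat} {O : set 'rV[R]_n}.
Context {u1 u2 : 'rV[R]_n -> R} {x : 'rV[R]_n}.
Hypothesis O_open : open O.
Hypothesis Ox : O x.
Hypothesis x_max : forall y, O y -> u1 y - u2 y <= u1 x - u2 x.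
Hypothesis u1_diff : forall y, O y -> differentiable u1 y.
Hypothesis u2_diff : forall y, O y -> differentiable u2 y.
Hypothesis du1_diff : forall j, differentiable (partial j u1) x.
Hypothesis du2_diff : forall j, differentiable (partial j u2) x.

Let max_along (p : 'I_n -> R) :
  \sum_(j < n) p j * (partial j u1 x - partial j u2 x) = 0 /\
  hessian_form u1 x p <= hessian_form u2 x p.
Proof.
pose v := \row_j p j; pose D y := \sum_(j < n) p j * (partial j u1 y - partial j u2 y).
have wD y : O y -> is_derive y v (u1 - u2) (D y).
  move=> Oy; have [d1 d2] := (u1_diff _ Oy, u2_diff _ Oy).
  apply: is_derive_eq; first by apply: is_deriveB; apply/derivableP/diff_derivable.
  rewrite !derive_partialE // /D -sumrB.
  by apply: eq_bigr => j _; rewrite mxE mulrBr.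
have [Dd DdE] : is_derive x v D (hessian_form u1 x p - hessian_form u2 x p).
  have -> : D = \sum_(j < n) p j *: (partial j u1 - partial j u2).
    by apply/funext => y; rewrite /D fct_sumE.
  apply: is_derive_eq.
    apply: is_derive_sum => j; apply: is_deriveZ.
    by apply: is_deriveB; apply: derivableP; apply: diff_derivable.
  rewrite !hessian_formE // -sumrB; apply: eq_bigr => j _.
  by rewrite /GRing.scale /= mulrBr.
have [] := interior_max_derive O_open Ox x_max wD Dd.
by rewrite DdE subr_le0.
Qed.

Lemma partial_eq_at_max i : partial i u1 x = partial i u2 x.
Proof.
have [/eqP + _] := max_along (fun j => (delta_mx 0 i : 'rV[R]_n) 0 j).
by rewrite sum_delta_row subr_eq0 => /eqP.
Qed.

Lemma hessian_form_le_at_max p : hessian_form u1 x p <= hessian_form u2 x p.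
Proof. by have [] := max_along p. Qed.

Lemma laplacian_le_at_max : laplacian u1 x <= laplacian u2 x.
Proof. by apply: ler_sum => i _; rewrite -!hessian_form_delta hessian_form_le_at_max. Qed.

Lemma grad_norm2_eq_at_max : grad_norm2 u1 x = grad_norm2 u2 x.
Proof. by apply: eq_bigr => j _; rewrite partial_eq_at_max. Qed.

Lemma lm_operator_le_at_max : grad_norm2 u1 x < 1 ->
  lm_operator u1 x <= lm_operator u2 x.
Proof.
move=> gu1; have gu2 : grad_norm2 u2 x < 1 by rewrite -grad_norm2_eq_at_max.
have du_eq : (fun j => partial j u1 x) = (fun j => partial j u2 x).
  by apply/funext => j; apply: partial_eq_at_max.
have W0 : 0 < Num.sqrt (1 - grad_norm2 u1 x) by rewrite sqrtr_gt0 subr_gt0.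
rewrite (lm_operatorE _ _ du1_diff gu1) (lm_operatorE _ _ du2_diff gu2).
rewrite -grad_norm2_eq_at_max du_eq; apply: lerD; apply: ler_wpM2r.
- by rewrite invr_ge0 ltW.
- exact: laplacian_le_at_max.
- by rewrite invr_ge0 exprn_ge0 // ltW.
- exact: hessian_form_le_at_max.
Qed.

End interior_maximum_of_difference.

Lemma bounded_closure (R : realType) (V : normedModType R) (A : set V) :
  bounded_set A -> bounded_set (closure A).
Proof.
rewrite /= /bounded_near => Ab; apply: filterS Ab => M AM y Ay.
have AM' : A `<=` closed_ball_ Num.norm (0 : V) M.
  by move=> z Az; rewrite /closed_ball_ /= sub0r normrN; apply: AM.
have := closureS AM' Ay; rewrite -(closure_id _).1; last exact: closed_closed_ball_.
by rewrite /closed_ball_ /= sub0r normrN.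
Qed.

Lemma positive_solution_le {R : realType} {n : nat} {Omega : set 'rV[R]_n}
    {alpha : R} {phi u1 u2 : 'rV[R]_n -> R} :
  open Omega -> bounded_set Omega -> alpha < 0 ->
  is_positive_solution Omega alpha phi u1 ->
  is_positive_solution Omega alpha phi u2 ->
  forall x, closure Omega x -> u1 x <= u2 x.
Proof.
move=> Oo Ob al [[C1 c1] _ eq1 bd1 [t [t1 tb]]] [[C2 c2] pos2 eq2 bd2 _] x0 cx0.
rewrite leNgt; apply/negP => u12x0.
have cK : compact (closure Omega).
  by apply: bounded_closed_compact; [exact: bounded_closure | exact: closed_closure].
have [xm /set_mem cxm xmax] := EVT_max_rV (ex_intro _ x0 cx0) cK (within_continuousB c1 c2).
have u12 : u2 xm < u1 xm.
  by rewrite -subr_gt0 (lt_le_trans _ (xmax _ (mem_set cx0))) // subr_gt0.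
have Oxm : Omega xm.
  apply: contrapT => Oxm; have bxm : bdry Omega xm by split=> // /interior_subset.
  by move: u12; rewrite bd1 // bd2 // ltxx.
have xmaxO y : Omega y -> u1 y - u2 y <= u1 xm - u2 xm.
  by move=> Oy; apply: xmax; apply/mem_set/subset_closure.
have u1d y : Omega y -> differentiable u1 y by move=> /C1[].
have u2d y : Omega y -> differentiable u2 y by move=> /C2[].
have [_ du1d _] := C1 xm Oxm; have [_ du2d _] := C2 xm Oxm.
have gu1 : grad_norm2 u1 xm < 1.
  have : Num.sqrt (grad_norm2 u1 xm) < 1 := le_lt_trans (tb _ Oxm) t1.
  by rewrite -[X in _ < X]sqrtr1 ltr_sqrt.
have := lm_operator_le_at_max Oo Oxm xmaxO u1d u2d du1d du2d gu1.
rewrite eq1 // eq2 // -(grad_norm2_eq_at_max Oo Oxm xmaxO u1d u2d du1d du2d).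
apply/negP; rewrite -ltNge.
have u2xm : 0 < u2 xm by apply/pos2/subset_closure.
have W0 : 0 < Num.sqrt (1 - grad_norm2 u1 xm) by rewrite sqrtr_gt0 subr_gt0.
have u1xm : 0 < u1 xm := lt_trans u2xm u12.
by rewrite ltr_nM2l // ltf_pV2 ?posrE ?mulr_gt0 // ltr_pM2r.
Qed.

Theorem proposition4p4 (R : realType) (n : nat) (Omega : set 'rV[R]_n)
  (alpha : R) (phi : 'rV[R]_n -> R)
  (Omega_open : open Omega) (Omega_conn : connected Omega)
  (Omega_neq0 : Omega !=set0) (Omega_bnd : bounded_set Omega)
  (alpha_neg : alpha < 0)
  (phi_pos : forall x, bdry Omega x -> 0 < phi x)
  (u1 u2 : 'rV[R]_n -> R) :
  is_positive_solution Omega alpha phi u1 ->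
  is_positive_solution Omega alpha phi u2 ->
  forall x, closure Omega x -> u1 x = u2 x.
Proof.
move=> sol1 sol2 x Ox; apply: le_anti.
by rewrite (positive_solution_le Omega_open Omega_bnd alpha_neg sol1 sol2 x Ox)
  (positive_solution_le Omega_open Omega_bnd alpha_neg sol2 sol1 x Ox).
Qed.
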